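(* Let $d\ge2$, $N\ge1$, and $\beta=0$ (infinite temperature). Let $\mathbf p$ be a probability vector on $d$ levels and $\Pi$ a $d\times d$ permutation matrix, written as a product of transposition matrices $\Pi=\Pi_{i_mj_m}\Pi_{i_{m-1}j_{m-1}}\cdots\Pi_{i_1j_1}$ which is a decomposition into neighbour transpositions with respect to $\mathbf p$ (as defined in the context). Let $\mathcal P^{\Pi}=\mathcal P^{(i_mj_m)}\circ\cdots\circ\mathcal P^{(i_1j_1)}$. Then $$\mathcal P^{\Pi}(\mathbf p\otimes\boldsymbol\eta_M)=\mathbf q\otimes\boldsymbol\eta_M,\qquad \mathbf q=\big(\Pi+\epsilon\,\boldsymbol\Delta\big)\mathbf p+o\big(N^{-1/2}\big)\xrightarrow{N\to\infty}\Pi\mathbf p,$$ with $\epsilon=(\pi N)^{-1/2}$ and $$\boldsymbol\Delta=\sum_{l=1}^{m}\Big(\Pi_{i_mj_m}\cdots\Pi_{i_{l+1}j_{l+1}}\Big)\big(\mathbb 1-\Pi_{i_lj_l}\big)\Big(\Pi_{i_{l-1}j_{l-1}}\cdots\Pi_{i_1j_1}\Big)$$ (empty products being the identity).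
   Context: Setting: a $d$-level system with energies $E_1,\dots,E_d$; at $\beta=0$ its thermal distribution is uniform. An $N$-dimensional memory with trivial Hamiltonian has thermal state $\boldsymbol\eta_M=(1/N,\dots,1/N)$. Joint states are probability vectors $\mathbf Q$ of length $dN$, entry $(a-1)N+k$ corresponding to system level $a$ and memory level $k$; the joint thermal distribution $\Gamma=\boldsymbol\gamma\otimes\boldsymbol\eta_M$ is here uniform. $\Pi_{ij}$ denotes the permutation matrix transposing entries $i,j$. Two-level thermalisation $T_{xy}$: $Q_x\mapsto (Q_x+Q_y)\Gamma_x/(\Gamma_x+\Gamma_y)$, $Q_y\mapsto (Q_x+Q_y)\Gamma_y/(\Gamma_x+\Gamma_y)$, other entries unchanged. Round $\mathcal R^{(ij)}_k$ ($k=1,\dots,N$): apply sequentially, for $l=1,\dots,N$, $T_{(j-1)N+k,\,(i-1)N+l}$. $\widetilde{\mathcal P}^{(ij)}=\mathcal R^{(ij)}_N\circ\cdots\circ\mathcal R^{(ij)}_1$. Memory thermalisation $\mathcal T(\mathbf Q)=\mathbf q\otimes\boldsymbol\eta_M$, $q_a=\sum_{k}Q_{(a-1)N+k}$. $\mathcal P^{(ij)}=\mathcal T\circ\widetilde{\mathcal P}^{(ij)}$. $\beta$-order: for a distribution $\mathbf r$, its $\beta$-order is the permutation $\pi_{\mathbf r}$ arranging $(r_1/\gamma_1,\dots,r_d/\gamma_d)$ non-increasingly ($\pi_{\mathbf r}(a)$ is the position of $a$). A decomposition $\Pi=\Pi_{i_mj_m}\cdots\Pi_{i_1j_1}$ is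 into neighbour transpositions with respect to $\mathbf p$ if for each $k$ the transposition $\Pi_{i_kj_k}$ changes the $\beta$-order of $\Pi_{i_{k-1}j_{k-1}}\cdots\Pi_{i_1j_1}\mathbf p$ only by a transposition of two adjacent elements. *)

From HB Require Import structures.
From mathcomp Require Import all_boot all_order all_algebra all_fingroup.
From mathcomp Require Import all_classical all_reals all_analysis.
Set Implicit Arguments. Unset Strict Implicit. Unset Printing Implicit Defensive.
Import Order.TTheory GRing.Theory Num.Theory.
Local Open Scope ring_scope.

Section Defs.
Variable R : realType.

(* system distributions: column vectors 'cV_d ; joint system-memory states:
   matrices 'M_(d,N), entry (a,k) = entry (a-1)N+k of the paper *)

Definition prob_vec (d : nat) (p : 'cV[R]_d) : Prop :=
  (forall a, 0 <= p a 0) /\ \sum_a p a 0 = 1.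

Definition gamma0 (d : nat) : 'cV[R]_d := const_mx (d%:R)^-1.
Definition Gamma0 (d N : nat) : 'M[R]_(d, N) := \matrix_(a, k) (gamma0 d a 0 / N%:R).

Definition tensor_eta (d N : nat) (q : 'cV[R]_d) : 'M[R]_(d, N) :=
  \matrix_(a, k) (q a 0 / N%:R).

Definition Tlev (d N : nat) (G : 'M[R]_(d, N)) (x y : 'I_d * 'I_N)
  (Q : 'M[R]_(d, N)) : 'M[R]_(d, N) :=
  \matrix_(a, k)
    (if (a, k) == x then (Q x.1 x.2 + Q y.1 y.2) * G x.1 x.2 / (G x.1 x.2 + G y.1 y.2)
     else if (a, k) == y then (Q x.1 x.2 + Q y.1 y.2) * G y.1 y.2 / (G x.1 x.2 + G y.1 y.2)
     else Q a k).

Definition round (d N : nat) (i j : 'I_d) (k : 'I_N) (Q : 'M[R]_(d, N)) :=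
  foldl (fun Q' (l : 'I_N) => Tlev (Gamma0 d N) (j, k) (i, l) Q') Q (enum 'I_N).

Definition Ptilde (d N : nat) (i j : 'I_d) (Q : 'M[R]_(d, N)) :=
  foldl (fun Q' (k : 'I_N) => round i j k Q') Q (enum 'I_N).

Definition memtherm (d N : nat) (Q : 'M[R]_(d, N)) : 'M[R]_(d, N) :=
  tensor_eta N (\col_a (\sum_k Q a k)).

Definition Pij (d N : nat) (i j : 'I_d) (Q : 'M[R]_(d, N)) :=
  memtherm (Ptilde i j Q).

(* s = [:: (i_1,j_1); ...; (i_m,j_m)] ; P^Pi = P^{(i_m j_m)} o ... o P^{(i_1 j_1)} *)
Definition Pperm (d N : nat) (s : seq ('I_d * 'I_d)) (Q : 'M[R]_(d, N)) :=
  foldl (fun Q' t => Pij t.1 t.2 Q') Q s.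

Definition prodT (d : nat) (s : seq ('I_d * 'I_d)) : 'M[R]_d :=
  foldl (fun M t => tperm_mx t.1 t.2 *m M) 1%:M s.

Definition Delta (d : nat) (s : seq ('I_d * 'I_d)) : 'M[R]_d :=
  \sum_(l < size s)
    prodT (drop l.+1 s) *m (1%:M - tperm_mx (tnth (in_tuple s) l).1
                                             (tnth (in_tuple s) l).2)
      *m prodT (take l s).

(* pi is a beta-order of r: pi arranges (r_a / gamma_a)_a non-increasingly,
   i.e. pi a is the position of a (ties may be arranged in any order) *)
Definition beta_order (d : nat) (r : 'cV[R]_d) (sg : {perm 'I_d}) : Prop :=
  forall a b : 'I_d, (sg a < sg b)%N ->
    r b 0 / gamma0 d b 0 <= r a 0 / gamma0 d a 0.

Definition neighbour_transp (d : nat) (r : 'cV[R]_d) (i j : 'I_d) : Prop :=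
  exists sg : {perm 'I_d}, beta_order r sg /\
    ((sg i).+1 = sg j \/ (sg j).+1 = sg i).

Definition neighbour_decomposition (d : nat) (p : 'cV[R]_d)
  (s : seq ('I_d * 'I_d)) : Prop :=
  forall l : 'I_(size s),
    neighbour_transp (prodT (take l s) *m p)
      (tnth (in_tuple s) l).1 (tnth (in_tuple s) l).2.
End Defs.

Arguments prodT {R d}.
Arguments Delta {R d}.

From HB Require Import structures.
From mathcomp Require Import all_boot all_order all_algebra all_fingroup.
From mathcomp Require Import all_classical all_reals all_analysis.
From mathcomp Require Import ring lra zify.
Import Order.TTheory GRing.Theory Num.Theory.
Import numFieldNormedType.Exports.
Local Open Scope classical_set_scope.
Local Open Scope ring_scope.
Set Implicit Arguments. Unset Strict Implicit. Unset Printing Implicit Defensive.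

(* At infinite temperature every two-level thermalisation replaces two entries
   by their average.  During round [k] of [Ptilde i j] the memory cell [(j, k)]
   is averaged in turn with [(i, 1)], ..., [(i, N)], so the cell values obey
   the grid recursion [c(k, l) = (c(k, l - 1) + c(k - 1, l)) / 2], solved by
   binomial tail probabilities.  Summing them, [Pij i j] maps [p (x) eta] to
   [(Pi_ij + c_N (1 - Pi_ij)) p (x) eta] with [c_N = C(2N, N) / 4^N], so
   [Pperm s] acts through a product of such partial swaps, which equals
   [prodT s + c_N Delta s + O(c_N^2)].  The Wallis integrals of [cos ^+ n] over
   [[0, pi/2]] give [1 - 1/(2N + 1) <= pi N c_N^2 <= 1], hence
   [c_N = (pi N)^(-1/2) + o(N^(-1/2))] and [sqrt N c_N^2 -> 0]. *)

Section BinomTail.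
Local Open Scope nat_scope.

Definition binom_tail (k l : nat) : nat := \sum_(l <= i < k + l) 'C(k + l - 1, i).

Lemma binom_tailS0 k : binom_tail k.+1 0 = 2 ^ k.
Proof.
rewrite /binom_tail addn0 subn1 /= big_mkord (expnDn 1 1 k).
by apply: eq_bigr => i _; rewrite !exp1n !muln1.
Qed.

Lemma binom_tail0n l : binom_tail 0 l = 0.
Proof. by rewrite /binom_tail add0n big_geq. Qed.

Lemma binom_tailSS k l :
  binom_tail k.+1 l.+1 = binom_tail k.+1 l + binom_tail k l.+1.
Proof.
rewrite /binom_tail !addSn !addnS !subn1 /= big_add1 /=.
under eq_bigr do rewrite binS.
rewrite big_split /= addnC; congr (_ + _).
rewrite [in RHS]big_add1 /= big_nat_recr; last by lia.
by rewrite /= bin_small // addn0.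
Qed.

Lemma binom_tail_diag N : binom_tail N.+1 N = 'C(N.*2, N) + binom_tail N N.+1.
Proof.
rewrite /binom_tail addSn addnS subn1 /= addnn big_ltn //; lia.
Qed.

End BinomTail.

Lemma natr_doubleS (R : pzSemiRingType) N : N.*2.+1%:R = 2 * N%:R + 1 :> R.
Proof. by rewrite -natr1 -mul2n natrM. Qed.

Lemma natr_doubleSS (R : pzSemiRingType) N : N.*2.+2%:R = 2 * N%:R + 2 :> R.
Proof. by rewrite -addn2 natrD -mul2n natrM. Qed.

Section GridWeight.
Variable R : realType.

(* [grid_weight k l] is the probability of at least [l] heads in [k + l - 1]
   fair coin tosses: it solves the averaging recursion [grid_weightSS] with
   boundary values [1] for [l = 0] and [0] for [k = 0]. *)
Definition grid_weight (k l : nat) : R := (binom_tail k l)%:R / 2 ^+ (k + l).-1.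

Definition cbinom (N : nat) : R := 'C(N.*2, N)%:R / 2 ^+ N.*2.

Lemma cbinom_gt0 N : 0 < cbinom N.
Proof. by rewrite divr_gt0 ?exprn_gt0 // ltr0n bin_gt0 -addnn leq_addr. Qed.

Lemma grid_weightS0 k : grid_weight k.+1 0 = 1.
Proof. by rewrite /grid_weight binom_tailS0 addn0 natrX divff // expf_neq0. Qed.

Lemma grid_weight0n l : grid_weight 0 l = 0.
Proof. by rewrite /grid_weight binom_tail0n mul0r. Qed.

Lemma grid_weightSS k l :
  grid_weight k.+1 l.+1 = (grid_weight k.+1 l + grid_weight k l.+1) / 2.
Proof.
rewrite /grid_weight binom_tailSS natrD !addSn !addnS /= exprS.
by field; rewrite expf_neq0.
Qed.

Lemma grid_weight_sym k l : (0 < k + l)%N -> grid_weight k l + grid_weight l k = 1.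
Proof.
elim: {k l}(k + l).-1 {-2}k {-2}l (erefl (k + l).-1) => [|n IH] [|k] [|l] //= kl _;
  rewrite ?grid_weight0n ?grid_weightS0 ?add0r ?addr0 //; first by lia.
have h1 : grid_weight k.+1 l + grid_weight l k.+1 = 1 by apply: IH; lia.
have h2 : grid_weight k l.+1 + grid_weight l.+1 k = 1 by apply: IH; lia.
rewrite !grid_weightSS; lra.
Qed.

Lemma grid_weight_diag N : grid_weight N.+1 N - grid_weight N N.+1 = cbinom N.
Proof.
rewrite /grid_weight /cbinom binom_tail_diag natrD addSn addnS /= addnn.
by field; rewrite expf_neq0.
Qed.

Lemma cbinomS N : cbinom N.+1 = cbinom N * (2 * N%:R + 1) / (2 * N%:R + 2).
Proof.
have bin_double : ('C(N.*2.+2, N.+1) * N.+1 = 2 * N.*2.+1 * 'C(N.*2, N))%N.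
  have := mul_bin_diag N.*2.+2 N; have := mul_bin_down N.*2.+1 N.
  rewrite /= (_ : N.*2.+1 - N = N.+1)%N; [nia | lia].
rewrite /cbinom (_ : N.+1.*2 = N.*2.+2)%N; last by lia.
have -> : 'C(N.*2.+2, N.+1)%:R = 2 * N.*2.+1%:R * 'C(N.*2, N)%:R / N.+1%:R :> R.
  by apply: (canRL (mulfK _)); rewrite ?pnatr_eq0 // -!natrM bin_double.
rewrite !exprS -natr1 natr_doubleS; set X := 2 ^+ N.*2.
have Xn0 : X != 0 by rewrite expf_neq0.
have N_ge0 : 0 <= N%:R :> R by [].
by field; rewrite Xn0 !gt_eqF //; lra.
Qed.

Lemma sum_grid_weightS K l : \sum_(k < K) grid_weight k.+1 l.+1 =
  \sum_(k < K) grid_weight k.+1 l - grid_weight K l.+1.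
Proof.
have shift : \sum_(k < K) grid_weight k l.+1 =
    \sum_(k < K) grid_weight k.+1 l.+1 - grid_weight K l.+1.
  have E : \sum_(k < K.+1) grid_weight k l.+1 =
      \sum_(k < K) grid_weight k l.+1 + grid_weight K l.+1 by rewrite big_ord_recr.
  by rewrite big_ord_recl grid_weight0n add0r in E; rewrite E addrK.
have : (\sum_(k < K) grid_weight k.+1 l.+1) * 2 =
    \sum_(k < K) grid_weight k.+1 l + \sum_(k < K) grid_weight k l.+1.
  rewrite big_distrl -big_split /=; apply: eq_bigr => k _.
  by rewrite grid_weightSS; field.
rewrite shift; lra.
Qed.

Lemma sum_grid_weight_diag N : \sum_(k < N) grid_weight k.+1 N = N%:R * cbinom N.
Proof.
elim: N => [|N IH]; first by rewrite big_ord0 mul0r.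
rewrite big_ord_recr /= sum_grid_weightS IH grid_weightSS cbinomS.
have -> : grid_weight N.+1 N = grid_weight N N.+1 + cbinom N.
  by rewrite -grid_weight_diag addrC subrK.
have N0 : 0 <= N%:R :> R by [].
by rewrite -natr1; field; rewrite gt_eqF //; lra.
Qed.

End GridWeight.

Lemma foldl_enum_ord (T : Type) n (f : T -> 'I_n -> T) (M : nat -> T) :
  (forall l : 'I_n, f (M l) l = M l.+1) -> foldl f (M 0%N) (enum 'I_n) = M n.
Proof.
move=> fM; suff G s m : map val s = iota m (size s) ->
    foldl f (M m) s = M (m + size s)%N by rewrite G ?size_enum_ord ?val_enum_ord.
elim: s m => [|x s IH] m /=; first by rewrite addn0.
by case=> <- hs; rewrite fM IH // addSnnS.
Qed.

Lemma Tlev_eq_weights (R : realType) d N (G Q : 'M[R]_(d, N)) x y :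
  G x.1 x.2 = G y.1 y.2 -> G x.1 x.2 != 0 ->
  Tlev G x y Q = \matrix_(a, k) if ((a, k) == x) || ((a, k) == y)
                                then (Q x.1 x.2 + Q y.1 y.2) / 2 else Q a k.
Proof.
move=> Gxy Gx0; apply/matrixP => a k; rewrite !mxE -Gxy.
have avg (u : R) : u * G x.1 x.2 / (G x.1 x.2 + G x.1 x.2) = u / 2.
  by field; rewrite -mulr2n -mulr_natr mulf_neq0 ?pnatr_eq0.
by case: ifP => _ /=; rewrite avg //; case: ifP.
Qed.

Definition partial_swap (R : realType) d (c : R) (i j : 'I_d) : 'M[R]_d :=
  tperm_mx i j + c *: (1%:M - tperm_mx i j).

Lemma partial_swap_mulmx (R : realType) d n (c : R) (i j : 'I_d) (p : 'M[R]_(d, n)) a b :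
  (partial_swap c i j *m p) a b = p (tperm i j a) b + c * (p a b - p (tperm i j a) b).
Proof. by rewrite mulmxDl -scalemxAl mulmxBl mul1mx -row_permE !mxE. Qed.

Section OneTransposition.
Variables (R : realType) (d N : nat) (i j : 'I_d) (p : 'cV[R]_d).
Hypotheses (d_gt0 : (0 < d)%N) (N_gt0 : (0 < N)%N) (neq_ij : i != j).

Let A : R := p i 0 / N%:R.
Let B : R := p j 0 / N%:R.

Definition cell (k l : nat) : R := A + (B - A) * grid_weight R k l.

Lemma cellS0 k : cell k.+1 0 = B.
Proof. by rewrite /cell grid_weightS0 mulr1 addrC subrK. Qed.

Lemma cell0n l : cell 0 l = A.
Proof. by rewrite /cell grid_weight0n mulr0 addr0. Qed.

Lemma cellSS k l : cell k.+1 l.+1 = (cell k.+1 l + cell k l.+1) / 2.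
Proof. by rewrite /cell grid_weightSS; field. Qed.

(* The state of [Ptilde i j] from [tensor_eta N p] after the first [l]
   thermalisations of round [k] (rounds counted from [0]): a memory cell
   [(i, m)] averaged in [r] rounds so far holds [cell r m.+1], and [(j, m)]
   holds [cell m.+1 N] once its round is over. *)
Definition Pstate (k l : nat) : 'M[R]_(d, N) := \matrix_(a, m)
  if a == j then (if (m < k)%N then cell m.+1 N
                  else if m == k :> nat then cell k.+1 l else B)
  else if a == i then (if (m < l)%N then cell k.+1 m.+1 else cell k m.+1)
  else p a 0 / N%:R.

Lemma Pstate_step (k l : 'I_N) :
  Tlev (Gamma0 R d N) (j, k) (i, l) (Pstate k l) = Pstate k l.+1.
Proof.
have G0 : (Gamma0 R d N) j k != 0.
  by rewrite !mxE mulf_neq0 ?invr_eq0 ?pnatr_eq0 -?lt0n.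
have G_eq : Gamma0 R d N j k = Gamma0 R d N i l by rewrite !mxE.
rewrite Tlev_eq_weights //; apply/matrixP => a m; rewrite !mxE /=.
rewrite !eqxx (negbTE neq_ij) !ltnn /= -cellSS !xpair_eqE.
rewrite (_ : (m == k) = (m == k :> nat)) // (_ : (m == l) = (m == l :> nat)) //.
case: (eqVneq a j) => [->|aj] /=.
  rewrite [j == i]eq_sym (negbTE neq_ij) orbF.
  by case: (ltngtP m k).
case: (eqVneq a i) => [_|ai] //=.
case: (ltngtP m l) => ml; rewrite ltnS.
- by rewrite ltnW.
- by rewrite leqNgt ml.
- by rewrite ml leqnn.
Qed.

Lemma round_Pstate (k : 'I_N) : round i j k (Pstate k 0) = Pstate k N.
Proof. by apply: (foldl_enum_ord (M := Pstate k)) => l; exact: Pstate_step. Qed.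

Lemma Pstate_next k : Pstate k N = Pstate k.+1 0.
Proof.
apply/matrixP => a m; rewrite !mxE ltn_ord; case: (a == j) => //.
case: (ltngtP m k) => mk; rewrite ltnS.
- by rewrite ltnW.
- by rewrite leqNgt mk /=; case: ifP; rewrite ?cellS0.
- by rewrite mk leqnn.
Qed.

Lemma Ptilde_tensor_eta : Ptilde i j (tensor_eta N p) = Pstate N 0.
Proof.
have -> : tensor_eta N p = Pstate 0 0.
  apply/matrixP => a m; rewrite !mxE.
  case: (eqVneq a j) => [->|_]; first by case: ifP; rewrite ?cellS0.
  by case: (eqVneq a i) => [->|_]; rewrite ?cell0n.
apply: (foldl_enum_ord (M := fun k => Pstate k 0)) => k.
by rewrite round_Pstate Pstate_next.
Qed.

Lemma sum_Pstate a : \sum_m Pstate N 0 a m = (partial_swap (cbinom R N) i j *m p) a 0.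
Proof.
have N0 : N%:R != 0 :> R by rewrite pnatr_eq0 -lt0n.
have sum_cst (x : R) : \sum_(m < N) x / N%:R = x.
  by rewrite sumr_const card_ord -[_ *+ N]mulr_natr divfK.
rewrite (partial_swap_mulmx (cbinom R N) i j p a 0); under eq_bigr do rewrite mxE.
case: (eqVneq a j) => [->|aj].
  rewrite tpermR; under eq_bigr do rewrite ltn_ord /cell.
  rewrite big_split /= sum_cst -big_distrr /= sum_grid_weight_diag /B /A.
  by field.
case: (eqVneq a i) => [->|ai].
  rewrite tpermL (eq_bigr (fun m : 'I_N => A + (B - A) * (1 - grid_weight R m.+1 N))).
    rewrite big_split /= sum_cst -big_distrr /= big_split /= sumrN sumr_const.
    by rewrite card_ord sum_grid_weight_diag /B /A -mulr_natr; field.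
  move=> m _; rewrite /cell -(grid_weight_sym R (_ : 0 < N + m.+1)%N) ?addnS //.
  by rewrite addrK.
by rewrite tpermD 1?eq_sym // subrr mulr0 addr0 sum_cst.
Qed.

Lemma Pij_tensor_eta :
  Pij i j (tensor_eta N p) = tensor_eta N (partial_swap (cbinom R N) i j *m p).
Proof.
rewrite /Pij Ptilde_tensor_eta /memtherm; congr tensor_eta.
by apply/matrixP => a z; rewrite (ord1 z) mxE sum_Pstate.
Qed.

End OneTransposition.

Section Products.
Variables (R : realType) (d : nat).
Implicit Types (s : seq ('I_d * 'I_d)) (c : R).

Definition prod_partial_swap c s : 'M[R]_d :=
  foldl (fun M t => partial_swap c t.1 t.2 *m M) 1%:M s.

Lemma foldl_mulmxr (f : 'I_d * 'I_d -> 'M[R]_d) (X Y : 'M[R]_d) s :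
  foldl (fun M t => f t *m M) (X *m Y) s = foldl (fun M t => f t *m M) X s *m Y.
Proof. by elim: s X => //= t s IH X; rewrite mulmxA IH. Qed.

Lemma prod_partial_swap_cons c t s :
  prod_partial_swap c (t :: s) = prod_partial_swap c s *m partial_swap c t.1 t.2.
Proof. by rewrite /prod_partial_swap /= -foldl_mulmxr mul1mx mulmx1. Qed.

Lemma prodT_cons t s : prodT (t :: s) = prodT s *m tperm_mx t.1 t.2 :> 'M[R]_d.
Proof. by rewrite /prodT /= -foldl_mulmxr mul1mx mulmx1. Qed.

Lemma Delta_cons t s : Delta (t :: s) =
  prodT s *m (1%:M - tperm_mx t.1 t.2) + Delta s *m tperm_mx t.1 t.2 :> 'M[R]_d.
Proof.
rewrite /Delta big_ord_recl /= drop0 !(tnth_nth t) /= mulmx1 mulmx_suml.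
by congr (_ + _); apply: eq_bigr => l _; rewrite !(tnth_nth t) /= prodT_cons !mulmxA.
Qed.

Lemma Pperm_tensor_eta N s (p : 'cV[R]_d) : (0 < d)%N -> (0 < N)%N ->
  all (fun t => t.1 != t.2) s ->
  Pperm s (tensor_eta N p) = tensor_eta N (prod_partial_swap (cbinom R N) s *m p).
Proof.
move=> d_gt0 N_gt0; elim: s p => [|t s IH] p /=; first by rewrite mul1mx.
case/andP=> neq_t all_s.
by rewrite /Pperm /= Pij_tensor_eta // -/(Pperm _ _) IH // prod_partial_swap_cons mulmxA.
Qed.

Definition expansion_error c s : 'M[R]_d :=
  prod_partial_swap c s - prodT s - c *: Delta s.

Lemma expansion_error_nil c : expansion_error c [::] = 0.
Proof. by rewrite /expansion_error /Delta big_ord0 scaler0 subr0 subrr. Qed.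

Lemma expansion_error_cons c t s : expansion_error c (t :: s) =
  expansion_error c s *m partial_swap c t.1 t.2 +
  c ^+ 2 *: (Delta s *m (1%:M - tperm_mx t.1 t.2)).
Proof.
rewrite /expansion_error prod_partial_swap_cons prodT_cons Delta_cons /partial_swap.
set U := 1%:M - _; set L := prod_partial_swap c s; set P := prodT s; set D := Delta s.
clearbody U L P D; rewrite !mulmxDr !mulmxBl -!scalemxAr -!scalemxAl.
move: (L *m tperm_mx _ _) (L *m U) (P *m tperm_mx _ _) (P *m U) (D *m tperm_mx _ _) (D *m U).
by move=> ? ? ? ? ? ?; apply/matrixP => a b; rewrite !mxE; ring.
Qed.

End Products.

Section Wallis.
Variable R : realType.

(* A primitive of [cos ^+ n], by the reduction formula
   [int cos^(m+2) = cos^(m+1) sin / (m+2) + (m+1)/(m+2) int cos^m]. *)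
Fixpoint cos_pow_primitive (n : nat) : R -> R :=
  match n with
  | 0 => id
  | 1 => @sin R
  | m.+2 => m.+2%:R^-1 \*: (@cos R ^+ m.+1 * @sin R) +
            (m.+1%:R / m.+2%:R) \*: cos_pow_primitive m
  end.

Lemma is_derive_cos_pow_primitive n (x : R) :
  is_derive x 1 (cos_pow_primitive n) (cos x ^+ n).
Proof.
elim/ltn_ind: n x => -[_ x|[_ x|m IH x]]; first by rewrite expr0; exact: is_derive_id.
  by rewrite expr1; exact: is_derive_sin.
have IHm := IH m (leqW (ltnSn m)) x.
apply: (is_derive_eq (is_deriveD (is_deriveZ m.+2%:R^-1 (is_deriveM (is_deriveX m.+1
  (is_derive_cos x)) (is_derive_sin x))) (is_deriveZ (m.+1%:R / m.+2%:R) IHm))).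
rewrite /GRing.scale /= exprfctE (exprSr _ m.+1) exprSr.
have -> : sin x * (m.+1%:R * cos x ^+ m * - sin x) =
  - (m.+1%:R * cos x ^+ m) * sin x ^+ 2 by ring.
rewrite sin2cos2 -[m.+2]addn2 -[m.+1]addn1 !natrD.
by field; rewrite -natrD pnatr_eq0 addn2.
Qed.

Definition wallis (n : nat) : R := cos_pow_primitive n (pi / 2) - cos_pow_primitive n 0.

Lemma wallisSS m : wallis m.+2 = m.+1%:R / m.+2%:R * wallis m.
Proof.
have E z : cos_pow_primitive m.+2 z =
    m.+2%:R^-1 * (cos z ^+ m.+1 * sin z) + m.+1%:R / m.+2%:R * cos_pow_primitive m z.
  by rewrite /= exprfctE.
by rewrite /wallis !E cos_pihalf sin0 expr0n /= !mul0r !mulr0 !add0r mulrBr.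
Qed.

Lemma wallisS_le n : wallis n.+1 <= wallis n.
Proof.
pose H := cos_pow_primitive n - cos_pow_primitive n.+1.
have dH (x : R) : is_derive x 1 H (cos x ^+ n - cos x ^+ n.+1).
  by apply: is_deriveB; apply: is_derive_cos_pow_primitive.
have cH : {within `[0, pi / 2], continuous H}.
  apply: continuous_subspaceT => x; apply: differentiable_continuous.
  by apply/derivable1_diffP; have /(@ex_derive _ _ _ _ _ _ _) := dH x.
have pi2_gt0 : (0 : R) < pi / 2 by rewrite divr_gt0 // pi_gt0.
have [c c_in Hc] := MVT pi2_gt0 (fun x _ => dH x) cH.
have /andP[cos_ge0 cos_le1] : 0 <= cos c <= 1.
  rewrite cos_le1 andbT; apply: cos_ge0_pihalf.
  move: c_in; rewrite in_itv /= => /andP[c_gt0 c_lt].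
  by rewrite !ltW // (lt_trans _ c_gt0) // oppr_lt0.
have -> : wallis n = wallis n.+1 + (H (pi / 2) - H 0).
  by rewrite /wallis /H !fctE; lra.
rewrite lerDl Hc subr0; apply: mulr_ge0; last exact: ltW.
rewrite exprS -{1}[cos c ^+ n]mul1r -mulrBl.
by apply: mulr_ge0; rewrite ?subr_ge0 ?exprn_ge0.
Qed.

Lemma wallis_even N : wallis N.*2 = pi / 2 * cbinom R N.
Proof.
elim: N => [|N IH]; first by rewrite /wallis /cbinom /= subr0 bin0 expr0 divr1 mulr1.
rewrite doubleS wallisSS IH cbinomS natr_doubleS natr_doubleSS.
have N0 : 0 <= N%:R :> R by [].
by field; rewrite gt_eqF //; lra.
Qed.

Lemma wallis_odd N : wallis N.*2.+1 * ((2 * N%:R + 1) * cbinom R N) = 1.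
Proof.
elim: N => [|N IH].
  by rewrite /wallis /cbinom /= sin_pihalf sin0 subr0 bin0 expr0 mulr0 add0r divr1 !mul1r.
have n3 : N.*2.+3%:R = 2 * N%:R + 3 :> R by rewrite -addn3 natrD -mul2n natrM.
rewrite -[RHS]IH doubleS wallisSS cbinomS natr_doubleSS n3 -natr1.
have N0 : 0 <= N%:R :> R by [].
by field; rewrite !gt_eqF //; lra.
Qed.

Lemma wallis_bounds N : 1 - (2 * N%:R + 1)^-1 <= pi * N%:R * cbinom R N ^+ 2 <= 1.
Proof.
have lo := wallisS_le N.*2; have hi := wallisS_le N.*2.+1.
rewrite wallis_even in lo; rewrite -doubleS wallis_even cbinomS in hi.
have c_gt0 := cbinom_gt0 R N; have pi_gt0 : 0 < pi :> R := pi_gt0 R.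
move: lo hi (wallis_odd N) c_gt0.
set w := wallis _; set c := cbinom R N; set n := N%:R => lo hi odd c_gt0.
have n_ge0 : 0 <= n by [].
have k_ge0 : 0 <= (2 * n + 1) * c by rewrite mulr_ge0 ?ltW //; lra.
have L : 2 <= pi * c ^+ 2 * (2 * n + 1).
  by have := ler_wpM2r k_ge0 lo; rewrite odd; nra.
have U : pi * c ^+ 2 * (2 * n + 1) ^+ 2 <= 4 * n + 4.
  have := ler_wpM2r k_ge0 hi; rewrite odd.
  have -> : pi / 2 * (c * (2 * n + 1) / (2 * n + 2)) * ((2 * n + 1) * c) =
    pi * c ^+ 2 * (2 * n + 1) ^+ 2 / (4 * n + 4) by field; rewrite !gt_eqF //; lra.
  by rewrite ler_pdivrMr ?mul1r //; lra.
have t_gt0 : 0 < 2 * n + 1 by lra.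
apply/andP; split.
  have -> : 1 - (2 * n + 1)^-1 = 2 * n / (2 * n + 1) by field; rewrite gt_eqF.
  by rewrite ler_pdivrMr //; nra.
by rewrite -(ler_pM2r (exprn_gt0 2 t_gt0)) mul1r; nra.
Qed.

End Wallis.

Section Limits.
Variable R : realType.

Lemma cvg0_le_norm (f g : nat -> R) :
  (forall N, (0 < N)%N -> `|f N| <= g N) -> g @ \oo --> 0 -> f @ \oo --> 0.
Proof.
move=> fg g0; have Ng0 : (fun N => - g N) @ \oo --> 0 by rewrite -oppr0; apply: cvgN.
apply: (squeeze_cvgr _ Ng0 g0); near=> N; rewrite -ler_norml; apply: fg.
by near: N; exact: nbhs_infty_ge.
Unshelve. all: by end_near.
Qed.

Lemma cvg_inv_sqrt : (fun N : nat => (Num.sqrt N%:R)^-1 : R) @ \oo --> 0.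
Proof.
have sqrt_harmonic : (fun n => Num.sqrt (harmonic n)) @ \oo --> (0 : R).
  rewrite -sqrtr0; apply: (continuous_cvg _ (@sqrt_continuous R _)).
  exact: cvg_harmonic.
rewrite -cvg_shiftS; under eq_cvg do rewrite /= -sqrtrV //.
exact: sqrt_harmonic.
Qed.

Lemma cvg_mulmx_entrywise m n k (A : nat -> 'M[R]_(m, n)) (B : nat -> 'M[R]_(n, k))
    (A0 : 'M[R]_(m, n)) (B0 : 'M[R]_(n, k)) :
  (forall a b, (fun N => A N a b) @ \oo --> A0 a b) ->
  (forall a b, (fun N => B N a b) @ \oo --> B0 a b) ->
  forall a b, (fun N => (A N *m B N) a b) @ \oo --> (A0 *m B0) a b.
Proof.
move=> cvgA cvgB a b; rewrite mxE; under eq_cvg do rewrite mxE.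
by apply: cvg_big; [exact: add_continuous | move=> c _; apply: cvgM].
Qed.

Lemma pi_ge1 : 1 <= pi :> R.
Proof. by apply: le_trans (pi_ge2 R); rewrite ler1n. Qed.

Lemma sqrt_cbinom_le1 N : Num.sqrt N%:R * cbinom R N <= 1.
Proof.
have c_ge0 := ltW (cbinom_gt0 R N).
rewrite -(ler_pXn2r (_ : 0 < 2)%N) ?nnegrE ?mulr_ge0 ?sqrtr_ge0 //.
rewrite expr1n exprMn sqr_sqrtr //; apply: le_trans (andP (wallis_bounds R N)).2.
by rewrite -mulrA ler_peMl ?mulr_ge0 ?exprn_ge0 ?pi_ge1.
Qed.

Lemma cvg_cbinom : (fun N => cbinom R N) @ \oo --> 0.
Proof.
apply: (cvg0_le_norm _ cvg_inv_sqrt) => N N_gt0.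
have sqrtN_gt0 : 0 < Num.sqrt N%:R :> R by rewrite sqrtr_gt0 ltr0n.
rewrite ger0_norm ?(ltW (cbinom_gt0 R N)) // -(ler_pM2l sqrtN_gt0) mulfV ?gt_eqF //.
exact: sqrt_cbinom_le1.
Qed.

Lemma cvg_sqrt_cbinom_sqr : (fun N => Num.sqrt N%:R * cbinom R N ^+ 2) @ \oo --> 0.
Proof.
apply: (cvg0_le_norm _ cvg_cbinom) => N _.
have c_gt0 := cbinom_gt0 R N.
rewrite ger0_norm; last by rewrite mulr_ge0 ?sqrtr_ge0 ?exprn_ge0 ?ltW.
by rewrite expr2 mulrA ler_piMl ?(ltW c_gt0) ?sqrt_cbinom_le1.
Qed.

Lemma cvg_sqrt_cbinom_dev :
  (fun N => Num.sqrt N%:R * (cbinom R N - (Num.sqrt (pi * N%:R))^-1)) @ \oo --> 0.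
Proof.
apply: (cvg0_le_norm _ (@cvg_harmonic R)) => N N_gt0.
have pi_gt0 : 0 < pi :> R := pi_gt0 R.
have sqrt_pi_ge1 : 1 <= Num.sqrt pi :> R.
  by rewrite -sqrtr1 ler_sqrt ?pi_ge1 // ltW.
have sqrtN_gt0 : 0 < Num.sqrt N%:R :> R by rewrite sqrtr_gt0 ltr0n.
have c_gt0 := cbinom_gt0 R N.
have /andP[lo hi] := wallis_bounds R N.
have -> : Num.sqrt N%:R * (cbinom R N - (Num.sqrt (pi * N%:R))^-1) =
    (Num.sqrt (pi * N%:R) * cbinom R N - 1) / Num.sqrt pi.
  by rewrite sqrtrM ?ltW //; field; rewrite !gt_eqF // (lt_le_trans ltr01 sqrt_pi_ge1).
have : (Num.sqrt (pi * N%:R) * cbinom R N) ^+ 2 = pi * N%:R * cbinom R N ^+ 2.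
  by rewrite exprMn sqr_sqrtr // mulr_ge0 // ltW.
move: lo hi; set z := Num.sqrt (pi * N%:R) * cbinom R N.
set y := pi * N%:R * cbinom R N ^+ 2 => lo hi z2.
have z_ge0 : 0 <= z by rewrite mulr_ge0 ?sqrtr_ge0 ?ltW.
have z_le1 : z <= 1 by nra.
rewrite normrM normfV (ger0_norm (sqrtr_ge0 pi)) ler0_norm ?subr_le0 //.
apply: (@le_trans _ _ (1 - z)).
  by rewrite opprB ler_pdivrMr ?(lt_le_trans ltr01) // ler_peMr // subr_ge0.
apply: (@le_trans _ _ (1 - z ^+ 2)).
  by rewrite lerD2l lerN2 expr2 ler_piMl.
apply: (@le_trans _ _ (2 * N%:R + 1)^-1); first by rewrite z2; lra.
have N_ge0 : 0 <= N%:R :> R by [].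
rewrite (_ : harmonic N = N.+1%:R^-1) // lef_pV2 ?posrE -?natr1; lra.
Qed.

End Limits.

Section Asymptotics.
Variables (R : realType) (d : nat).
Implicit Types (s : seq ('I_d * 'I_d)) (a b : 'I_d).

Lemma partial_swap_cvg (i j : 'I_d) a b :
  (fun N => partial_swap (cbinom R N) i j a b) @ \oo --> (tperm_mx i j : 'M[R]_d) a b.
Proof.
have entry N : partial_swap (cbinom R N) i j a b =
    (tperm_mx i j : 'M[R]_d) a b + cbinom R N * (1%:M - tperm_mx i j : 'M[R]_d) a b.
  by rewrite /partial_swap mxE [X in _ + X]mxE.
under eq_cvg do rewrite entry.
have h := cvgD (cvg_cst (F := \oo) ((tperm_mx i j : 'M[R]_d) a b))
  (cvgMr_tmp (b := (1%:M - tperm_mx i j : 'M[R]_d) a b) (@cvg_cbinom R)).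
by rewrite mul0r addr0 in h; exact: h.
Qed.

Lemma prod_partial_swap_cvg s a b :
  (fun N => prod_partial_swap (cbinom R N) s a b) @ \oo --> prodT s a b.
Proof.
elim: s a b => [|t s IH] a b; first exact: cvg_cst.
under eq_cvg do rewrite prod_partial_swap_cons.
by rewrite prodT_cons; apply: cvg_mulmx_entrywise => // a' b'; exact: partial_swap_cvg.
Qed.

Lemma cvg_scaled_expansion_error s a b :
  (fun N => (Num.sqrt N%:R *: expansion_error (cbinom R N) s) a b) @ \oo --> 0.
Proof.
elim: s a b => [|t s IH] a b.
  by under eq_cvg do rewrite expansion_error_nil scaler0 mxE; exact: cvg_cst.
set K := (Delta s *m (1%:M - tperm_mx t.1 t.2) : 'M[R]_d) a b.
have error_cons N : (Num.sqrt N%:R *: expansion_error (cbinom R N) (t :: s)) a b =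
    ((Num.sqrt N%:R *: expansion_error (cbinom R N) s) *m
      partial_swap (cbinom R N) t.1 t.2) a b + Num.sqrt N%:R * cbinom R N ^+ 2 * K.
  by rewrite expansion_error_cons scalerDr scalerA mxE [X in _ + X]mxE scalemxAl.
under eq_cvg do rewrite error_cons.
have IH0 a' b' : (fun N => (Num.sqrt N%:R *: expansion_error (cbinom R N) s) a' b')
    @ \oo --> (0 : 'M[R]_d) a' b'.
  by rewrite mxE; exact: IH.
have h := cvgD (cvg_mulmx_entrywise (a := a) (b := b) IH0
  (fun a' b' => @partial_swap_cvg t.1 t.2 a' b'))
  (cvgMr_tmp (b := K) (@cvg_sqrt_cbinom_sqr R)).
by rewrite mul0mx mxE mul0r addr0 in h; exact: h.
Qed.

Lemma cvg_scaled_deviation s (p : 'cV[R]_d) a :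
  (fun N => Num.sqrt N%:R * ((prod_partial_swap (cbinom R N) s *m p) a 0 -
     ((prodT s + (Num.sqrt (pi * N%:R))^-1 *: Delta s) *m p) a 0)) @ \oo --> 0.
Proof.
set K := (Delta s *m p) a 0.
have split_deviation N : Num.sqrt N%:R * ((prod_partial_swap (cbinom R N) s *m p) a 0 -
      ((prodT s + (Num.sqrt (pi * N%:R))^-1 *: Delta s) *m p) a 0) =
    ((Num.sqrt N%:R *: expansion_error (cbinom R N) s) *m p) a 0 +
    Num.sqrt N%:R * (cbinom R N - (Num.sqrt (pi * N%:R))^-1) * K.
  rewrite /expansion_error -!scalemxAl !mulmxBl mulmxDl -!scalemxAl.
  rewrite /K; move: (prod_partial_swap _ s *m p) (prodT s *m p) (Delta s *m p).
  by move=> L T D; rewrite !mxE; ring.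
under eq_cvg do rewrite split_deviation.
have err0 a' b' : (fun N => (Num.sqrt N%:R *: expansion_error (cbinom R N) s) a' b')
    @ \oo --> (0 : 'M[R]_d) a' b'.
  by rewrite mxE; exact: cvg_scaled_expansion_error.
have p_cst a' (b' : 'I_1) : (fun _ : nat => p a' b') @ \oo --> p a' b' by exact: cvg_cst.
have h := cvgD (cvg_mulmx_entrywise (a := a) (b := 0) err0 p_cst)
  (cvgMr_tmp (b := K) (@cvg_sqrt_cbinom_dev R)).
by rewrite mul0mx mxE mul0r addr0 in h; exact: h.
Qed.

End Asymptotics.

Lemma neighbour_decomposition_neq (R : realType) d (p : 'cV[R]_d) s :
  neighbour_decomposition p s -> all (fun t => t.1 != t.2) s.
Proof.
move=> nd; apply/allP => t t_in_s.
have t_idx : (index t s < size s)%N by rewrite index_mem.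
have [sg [_ adj]] := nd (Ordinal t_idx).
rewrite (tnth_nth t) /= nth_index // in adj.
by apply/eqP => eq_t; rewrite eq_t in adj; case: adj => /esym; apply: n_Sn.
Qed.

Theorem theorem1 (R : realType) (d : nat) (p : 'cV[R]_d)
  (s : seq ('I_d * 'I_d)) :
  (2 <= d)%N -> prob_vec p -> neighbour_decomposition p s ->
  exists q : nat -> 'cV[R]_d,
    (forall N : nat, (1 <= N)%N ->
       Pperm s (tensor_eta N p) = tensor_eta N (q N)) /\
    (forall a : 'I_d,
       (fun N : nat => Num.sqrt (N%:R) *
          (q N a 0 - ((prodT s + (Num.sqrt (pi * N%:R))^-1 *: Delta s) *m p) a 0))
       @ \oo --> (0 : R)) /\
    (forall a : 'I_d, (fun N : nat => q N a 0) @ \oo --> (prodT s *m p) a 0).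
Proof.
move=> d_ge2 _ nd; exists (fun N => prod_partial_swap (cbinom R N) s *m p).
split=> [N N_gt0|].
  by apply: Pperm_tensor_eta => //; [exact: ltnW | exact: neighbour_decomposition_neq nd].
split=> a; first exact: cvg_scaled_deviation.
have p_cst a' (b' : 'I_1) : (fun _ : nat => p a' b') @ \oo --> p a' b' by exact: cvg_cst.
exact: cvg_mulmx_entrywise (@prod_partial_swap_cvg R d s) p_cst a 0.
Qed.
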